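(* Let $I_3>0$, $g\in\mathbb{R}$, $a>0$, $b\neq 0$, and let $I_1(t)=a+bt$, considered on the time interval where $a+bt>0$. Consider the time-dependent Hamiltonian (Lagrange top in gravity with linearly time-dependent moment of inertia), in Euler angles $(\phi,\theta,\psi)$, $\theta\in(0,\pi)$, with conjugate momenta $(p_\phi,p_\theta,p_\psi)$: \[ H=\frac{1}{2I_1(t)}\Big(p_\theta^2+\frac{p_\phi^2+p_\psi^2-2p_\phi p_\psi\cos\theta}{\sin^2\theta}\Big)+\frac12\Big(\frac1{I_3}-\frac1{I_1(t)}\Big)p_\psi^2+g\cos\theta . \] Along any solution of Hamilton's equations, $p_\phi,p_\psi$ are constant, and with the new time $\tau=\log\big((a+bt)/a\big)$ (so that $I_1(t)=ae^{\tau}$) the function $y(\tau):=\theta(t)$ satisfies the trigonometric form of the degenerate fifth Painlevé equation \[ \frac{d^2y}{d\tau^2}=-\frac{\partial V}{\partial y},\qquad V(y,\tau)=-\frac{\kappa_\infty^2}{2\sin^2(y/2)}-\frac{\kappa_0^2}{2\cos^2(y/2)}-\frac{\gamma e^{\tau}}{2}\cos y, \] (i.e.\ $\delta=0$) with $\kappa_0^2=-\dfrac{(p_\phi+p_\psi)^2}{4b^2}$, $\kappa_\infty^2=-\dfrac{(p_\phi-p_\psi)^2}{4b^2}$, $\gamma=-\dfrac{2ag}{b^2}$. Conversely, the equation of motion of $\theta$ is equivalent to this equation.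
   Context: Hamilton's equations are $\dot q=\partial H/\partial p$, $\dot p=-\partial H/\partial q$ for each conjugate pair, with $\dot{}=d/dt$. The trigonometric form of $P_V$ with general $\delta$ has potential $V$ with the additional term $-\frac{\delta e^{2\tau}}{4}\cos^2y$; via $w=-\cot^2(y/2)$, $\zeta=e^\tau$ it is equivalent to the fifth Painlevé equation with $\alpha=\kappa_\infty^2/2$, $\beta=-\kappa_0^2/2$; the case $\delta=0$ is the degenerate fifth Painlevé equation. *)

From Stdlib Require Import Reals.
From Coquelicot Require Import Coquelicot.
Open Scope R_scope.

Definition I1 (a b t : R) : R := a + b * t.

Definition Ham (I3 g a b t : R) (phi th psi pphi pth ppsi : R) : R :=
  / (2 * I1 a b t) *
    (pth ^ 2 + (pphi ^ 2 + ppsi ^ 2 - 2 * pphi * ppsi * cos th) / (sin th) ^ 2)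
  + / 2 * (/ I3 - / I1 a b t) * ppsi ^ 2 + g * cos th.

Definition hamilton_solution (I3 g a b lo hi : R)
    (phi th psi pphi pth ppsi : R -> R) : Prop :=
  forall t, lo < t < hi ->
    let H := Ham I3 g a b t in
    is_derive phi t
      (Derive (fun x => H (phi t) (th t) (psi t) x (pth t) (ppsi t)) (pphi t)) /\
    is_derive th t
      (Derive (fun x => H (phi t) (th t) (psi t) (pphi t) x (ppsi t)) (pth t)) /\
    is_derive psi t
      (Derive (fun x => H (phi t) (th t) (psi t) (pphi t) (pth t) x) (ppsi t)) /\
    is_derive pphi t
      (- Derive (fun x => H x (th t) (psi t) (pphi t) (pth t) (ppsi t)) (phi t)) /\
    is_derive pth t
      (- Derive (fun x => H (phi t) x (psi t) (pphi t) (pth t) (ppsi t)) (th t)) /\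
    is_derive ppsi t
      (- Derive (fun x => H (phi t) (th t) x (pphi t) (pth t) (ppsi t)) (psi t)).

(* The equations of motion of the pair (theta, p_theta) alone, with
   p_phi, p_psi the given constants (phi, psi arbitrary: H does not depend
   on them). *)
Definition theta_equation (I3 g a b lo hi : R) (cphi cpsi : R)
    (phi psi : R -> R) (th pth : R -> R) : Prop :=
  forall t, lo < t < hi ->
    let H := Ham I3 g a b t in
    is_derive th t
      (Derive (fun x => H (phi t) (th t) (psi t) cphi x cpsi) (pth t)) /\
    is_derive pth t
      (- Derive (fun x => H (phi t) x (psi t) cphi (pth t) cpsi) (th t)).

(* Trigonometric form of P_V with delta = 0; kinf2, k02 stand for
   kappa_infinity^2 and kappa_0^2. *)
Definition VPV (kinf2 k02 gam : R) (y tau : R) : R :=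
  - kinf2 / (2 * (sin (y / 2)) ^ 2) - k02 / (2 * (cos (y / 2)) ^ 2)
  - gam * exp tau / 2 * cos y.

Definition kappa0_sq (b pphi ppsi : R) : R := - (pphi + ppsi) ^ 2 / (4 * b ^ 2).
Definition kappainf_sq (b pphi ppsi : R) : R := - (pphi - ppsi) ^ 2 / (4 * b ^ 2).
Definition gammaPV (a b g : R) : R := - (2 * a * g) / b ^ 2.

Definition tau_of (a b t : R) : R := ln ((a + b * t) / a).
Definition t_of (a b tau : R) : R := a * (exp tau - 1) / b.

Definition PV_deg_solution (kinf2 k02 gam a b lo hi : R) (y : R -> R) : Prop :=
  forall t, lo < t < hi ->
    let tau := tau_of a b t in
    ex_derive y tau /\
    is_derive (Derive y) tau
      (- Derive (fun z => VPV kinf2 k02 gam z tau) (y tau)).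

From Stdlib Require Import Reals Lra.
From Coquelicot Require Import Coquelicot.
Open Scope R_scope.

(* The heart of the argument is an identity between the Hamiltonian and the
   Painleve potential V: writing I = I_1(t) = a e^tau, as functions of theta
        H(theta) = (b^2 / I) V(theta, tau) + K,
   where K collects the theta-independent terms.  It rests on the half-angle
   decomposition of the centrifugal term
        (P^2 + Q^2 - 2 P Q cos x) / sin^2 x
          = (P - Q)^2 / (4 sin^2 (x/2)) + (P + Q)^2 / (4 cos^2 (x/2)).
   Hence dH/dtheta = (b^2 / I) dV/dy, while dH/dp_theta = p_theta / I and H
   does not depend on phi, psi (so p_phi, p_psi are conserved).  Since
   dt/dtau = I / b, the theta-equations theta' = p_theta / I,
   p_theta' = - dH/dtheta become, for y(tau) = theta(t(tau)),
        dy/dtau = p_theta / b,      d/dtau (p_theta / b) = - dV/dy,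
   which is P_V with delta = 0; conversely p_theta := b dy/dtau solves the
   theta-equations. *)

(* Adding a constant does not change the derivative (no differentiability
   assumption is needed, since the difference quotients coincide). *)
Lemma Derive_plus_const (f : R -> R) (c x : R) :
  Derive (fun z => f z + c) x = Derive f x.
Proof.
  unfold Derive. f_equal. apply Lim_ext. intros h. f_equal. ring.
Qed.

Lemma is_derive_chain (f g : R -> R) (x df dg : R) :
  is_derive f (g x) df -> is_derive g x dg ->
  is_derive (fun z => f (g z)) x (df * dg).
Proof.
  intros Hf Hg. rewrite Rmult_comm. exact (is_derive_comp f g x df dg Hf Hg).
Qed.

Lemma locally_open_interval (lo hi x : R) :
  lo < x < hi -> locally x (fun z => lo < z < hi).
Proof. intros Hx. exact (open_and _ _ (open_gt lo) (open_lt hi) _ Hx). Qed.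

Lemma zero_derivative_constant (f : R -> R) (lo hi : R) :
  (forall u, lo < u < hi -> is_derive f u 0) ->
  forall t s, lo < t < hi -> lo < s < hi -> f t = f s.
Proof.
  intros Hf t s Ht Hs.
  destruct (total_order_T t s) as [[Hlt | ->] | Hgt]; [| reflexivity |].
  - apply eq_is_derive; [intros u Hu; apply Hf; lra | exact Hlt].
  - symmetry. apply eq_is_derive; [intros u Hu; apply Hf; lra | exact Hgt].
Qed.

Lemma centrifugal_half_angle (P Q x : R) :
  sin (x / 2) <> 0 -> cos (x / 2) <> 0 ->
  (P ^ 2 + Q ^ 2 - 2 * P * Q * cos x) / sin x ^ 2
  = (P - Q) ^ 2 / (4 * sin (x / 2) ^ 2) + (P + Q) ^ 2 / (4 * cos (x / 2) ^ 2).
Proof.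
  intros Hs Hc.
  assert (Hsin : sin x = 2 * sin (x / 2) * cos (x / 2)).
  { rewrite <- sin_2a. f_equal. field. }
  assert (Hcos : cos x = cos (x / 2) ^ 2 - sin (x / 2) ^ 2).
  { replace x with (2 * (x / 2)) at 1 by field. rewrite cos_2a. ring. }
  assert (Hpyth : sin (x / 2) ^ 2 + cos (x / 2) ^ 2 = 1).
  { pose proof (sin2_cos2 (x / 2)) as E. unfold Rsqr in E. rewrite <- E. ring. }
  rewrite Hsin, Hcos.
  replace (P ^ 2 + Q ^ 2) with ((P ^ 2 + Q ^ 2) * (sin (x / 2) ^ 2 + cos (x / 2) ^ 2))
    by (rewrite Hpyth; ring).
  field. auto.
Qed.

Lemma Ham_PV_potential (I3 g a b t tau phi psi P p Q x : R) :
  0 < I3 -> 0 < a -> b <> 0 -> I1 a b t = a * exp tau -> 0 < x < PI ->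
  Ham I3 g a b t phi x psi P p Q
  = b ^ 2 / (a * exp tau)
      * VPV (kappainf_sq b P Q) (kappa0_sq b P Q) (gammaPV a b g) x tau
    + (/ (2 * (a * exp tau)) * p ^ 2 + / 2 * (/ I3 - / (a * exp tau)) * Q ^ 2).
Proof.
  intros HI3 Ha Hb HI Hx.
  assert (Hs : 0 < sin (x / 2)) by (apply sin_gt_0; lra).
  assert (Hc : 0 < cos (x / 2)) by (apply cos_gt_0; lra).
  pose proof (exp_pos tau) as He.
  unfold Ham. rewrite HI, centrifugal_half_angle by lra.
  unfold VPV, kappainf_sq, kappa0_sq, gammaPV.
  field. repeat split; try lra; apply Rgt_not_eq; lra.
Qed.

(* Consequently dH/dtheta = (b^2 / I_1) dV/dy on 0 < theta < pi: the two
   functions differ by a constant near theta. *)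
Lemma Ham_dtheta (I3 g a b t tau phi psi P p Q x : R) :
  0 < I3 -> 0 < a -> b <> 0 -> I1 a b t = a * exp tau -> 0 < x < PI ->
  Derive (fun z => Ham I3 g a b t phi z psi P p Q) x
  = b ^ 2 / (a * exp tau)
      * Derive (fun z => VPV (kappainf_sq b P Q) (kappa0_sq b P Q) (gammaPV a b g) z tau) x.
Proof.
  intros HI3 Ha Hb HI Hx.
  rewrite (Derive_ext_loc _ (fun z => b ^ 2 / (a * exp tau)
      * VPV (kappainf_sq b P Q) (kappa0_sq b P Q) (gammaPV a b g) z tau
    + (/ (2 * (a * exp tau)) * p ^ 2 + / 2 * (/ I3 - / (a * exp tau)) * Q ^ 2))).
  - rewrite Derive_plus_const. apply Derive_scal.
  - apply filter_imp with (P := fun z => 0 < z < PI).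
    + intros z Hz. apply Ham_PV_potential; assumption.
    + apply locally_open_interval. exact Hx.
Qed.

Lemma Ham_dpth (I3 g a b t phi th psi P p Q : R) :
  I1 a b t <> 0 ->
  Derive (fun z => Ham I3 g a b t phi th psi P z Q) p = p / I1 a b t.
Proof.
  intros HI. apply is_derive_unique. unfold Ham.
  auto_derive; [exact I | field; exact HI].
Qed.

Lemma Ham_dphi (I3 g a b t th psi P p Q x : R) :
  Derive (fun z => Ham I3 g a b t z th psi P p Q) x = 0.
Proof. unfold Ham. apply Derive_const. Qed.

Lemma Ham_dpsi (I3 g a b t phi th P p Q x : R) :
  Derive (fun z => Ham I3 g a b t phi th z P p Q) x = 0.
Proof. unfold Ham. apply Derive_const. Qed.

Lemma I1_t_of (a b tau : R) : b <> 0 -> I1 a b (t_of a b tau) = a * exp tau.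
Proof. intros Hb. unfold I1, t_of. field. exact Hb. Qed.

Lemma I1_tau_of (a b t : R) :
  0 < a -> 0 < a + b * t -> a * exp (tau_of a b t) = I1 a b t.
Proof.
  intros Ha Ht. unfold tau_of, I1.
  rewrite exp_ln by (apply Rdiv_lt_0_compat; assumption). field. lra.
Qed.

Lemma t_of_tau_of (a b t : R) :
  0 < a -> b <> 0 -> 0 < a + b * t -> t_of a b (tau_of a b t) = t.
Proof.
  intros Ha Hb Ht. unfold t_of.
  replace (a * (exp (tau_of a b t) - 1)) with (a * exp (tau_of a b t) - a) by ring.
  rewrite (I1_tau_of a b t Ha Ht). unfold I1. field. exact Hb.
Qed.

Lemma is_derive_t_of (a b tau : R) :
  is_derive (t_of a b) tau (a * exp tau / b).
Proof. unfold t_of. auto_derive; [exact I | unfold Rdiv; ring]. Qed.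

Lemma is_derive_tau_of (a b t : R) :
  0 < a -> 0 < a + b * t -> is_derive (tau_of a b) t (b / I1 a b t).
Proof.
  intros Ha Ht. unfold tau_of, I1.
  auto_derive.
  - apply Rdiv_lt_0_compat; assumption.
  - field. split; lra.
Qed.

Lemma locally_t_of_interval (a b lo hi tau : R) :
  lo < t_of a b tau < hi -> locally tau (fun s => lo < t_of a b s < hi).
Proof.
  intros Ht.
  assert (Hc : continuous (t_of a b) tau).
  { apply (@ex_derive_continuous R_AbsRing R_NormedModule). eexists. apply is_derive_t_of. }
  exact (Hc (fun u => lo < u < hi) (locally_open_interval lo hi _ Ht)).
Qed.

Section ThetaEquationAsPV.

Variables (I3 g a b lo hi cphi cpsi : R) (phi psi th : R -> R).
Hypotheses (HI3 : 0 < I3) (Ha : 0 < a) (Hb : b <> 0)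
  (HJ : forall t, lo < t < hi -> 0 < a + b * t)
  (Hth : forall t, lo < t < hi -> 0 < th t < PI).

Notation V := (VPV (kappainf_sq b cphi cpsi) (kappa0_sq b cphi cpsi) (gammaPV a b g)).
Notation y := (fun tau => th (t_of a b tau)).

Lemma I1_at_tau (t : R) : lo < t < hi -> I1 a b t = a * exp (tau_of a b t).
Proof. intros Ht. symmetry. apply I1_tau_of; [exact Ha | exact (HJ t Ht)]. Qed.

(* Forward direction: dy/dtau = p_theta / b, and differentiating once more
   turns p_theta' = -(b^2 / I_1) dV/dy into y'' = - dV/dy. *)
Lemma PV_of_theta_equation (pth : R -> R) :
  theta_equation I3 g a b lo hi cphi cpsi phi psi th pth ->
  PV_deg_solution (kappainf_sq b cphi cpsi) (kappa0_sq b cphi cpsi)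
    (gammaPV a b g) a b lo hi y.
Proof.
  intros Heq t Ht. cbv zeta beta.
  set (T := tau_of a b t).
  assert (HtT : t_of a b T = t) by (apply t_of_tau_of; auto).
  assert (Hvel : forall s, lo < t_of a b s < hi ->
            is_derive y s (pth (t_of a b s) / b)).
  { intros s Hs. destruct (Heq _ Hs) as [Hdth _].
    pose proof (I1_t_of a b s Hb) as HI. pose proof (exp_pos s) as He.
    rewrite Ham_dpth, HI in Hdth by (rewrite HI; nra).
    replace (pth (t_of a b s) / b)
      with (pth (t_of a b s) / (a * exp s) * (a * exp s / b)) by (field; lra).
    apply is_derive_chain; [exact Hdth | apply is_derive_t_of]. }
  split.
  - eexists. apply Hvel. rewrite HtT. exact Ht.
  - destruct (Heq t Ht) as [_ Hdpth].
    rewrite (Ham_dtheta I3 g a b t T) in Hdpth by auto using I1_at_tau.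
    pose proof (exp_pos T) as He.
    apply is_derive_ext_loc with (f := fun s => / b * pth (t_of a b s)).
    { apply filter_imp with (P := fun s => lo < t_of a b s < hi).
      - intros s Hs. symmetry. apply is_derive_unique.
        replace (/ b * pth (t_of a b s)) with (pth (t_of a b s) / b) by (unfold Rdiv; ring).
        exact (Hvel s Hs).
      - apply locally_t_of_interval. rewrite HtT. exact Ht. }
    rewrite HtT.
    replace (- Derive (fun z => V z T) (th t))
      with (/ b * (- (b ^ 2 / (a * exp T) * Derive (fun z => V z T) (th t))
                   * (a * exp T / b))) by (field; lra).
    apply is_derive_scal, is_derive_chain; [rewrite HtT; exact Hdpth | apply is_derive_t_of].
Qed.

Lemma theta_equation_of_PV :
  PV_deg_solution (kappainf_sq b cphi cpsi) (kappa0_sq b cphi cpsi)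
    (gammaPV a b g) a b lo hi y ->
  theta_equation I3 g a b lo hi cphi cpsi phi psi th
    (fun t => b * Derive y (tau_of a b t)).
Proof.
  intros HPV t Ht. cbv zeta.
  set (T := tau_of a b t).
  assert (HtT : t_of a b T = t) by (apply t_of_tau_of; auto).
  assert (HIT : I1 a b t = a * exp T) by (apply I1_at_tau; exact Ht).
  destruct (HPV t Ht) as [[v Hv] Hacc]. fold T in Hv, Hacc.
  pose proof (is_derive_tau_of a b t Ha (HJ t Ht)) as Htau.
  pose proof (exp_pos T) as He.
  split.
  - rewrite Ham_dpth by (rewrite HIT; nra).
    (* theta = y o tau near t *)
    apply is_derive_ext_loc with (f := fun s => y (tau_of a b s)).
    { apply filter_imp with (P := fun s => lo < s < hi).
      - intros s Hs. cbv beta. rewrite t_of_tau_of; auto.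
      - apply locally_open_interval. exact Ht. }
    rewrite (is_derive_unique _ _ _ Hv).
    replace (b * v / I1 a b t) with (v * (b / I1 a b t)) by (field; rewrite HIT; nra).
    exact (is_derive_chain y (tau_of a b) t v _ Hv Htau).
  - rewrite (Ham_dtheta I3 g a b t T) by auto.
    replace (- (b ^ 2 / (a * exp T) * Derive (fun z => V z T) (th t)))
      with (b * (- Derive (fun z => V z T) (y T) * (b / I1 a b t)))
      by (cbv beta; rewrite HtT, HIT; field; nra).
    apply is_derive_scal, is_derive_chain; [exact Hacc | exact Htau].
Qed.

End ThetaEquationAsPV.

Lemma hamilton_conserved_momenta (I3 g a b lo hi : R)
    (phi th psi pphi pth ppsi : R -> R) :
  hamilton_solution I3 g a b lo hi phi th psi pphi pth ppsi ->
  (forall t s, lo < t < hi -> lo < s < hi -> pphi t = pphi s) /\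
  (forall t s, lo < t < hi -> lo < s < hi -> ppsi t = ppsi s).
Proof.
  intros Hham. split; apply zero_derivative_constant; intros u Hu;
    destruct (Hham u Hu) as (_ & _ & _ & Hpphi & _ & Hppsi).
  - rewrite Ham_dphi, Ropp_0 in Hpphi. exact Hpphi.
  - rewrite Ham_dpsi, Ropp_0 in Hppsi. exact Hppsi.
Qed.

Lemma hamilton_theta_equation (I3 g a b lo hi t0 : R)
    (phi th psi pphi pth ppsi : R -> R) :
  hamilton_solution I3 g a b lo hi phi th psi pphi pth ppsi ->
  lo < t0 < hi ->
  theta_equation I3 g a b lo hi (pphi t0) (ppsi t0) phi psi th pth.
Proof.
  intros Hham Ht0 t Ht.
  destruct (hamilton_conserved_momenta I3 g a b lo hi _ _ _ _ _ _ Hham) as [Cphi Cpsi].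
  destruct (Hham t Ht) as (_ & Hdth & _ & _ & Hpth & _).
  rewrite <- (Cphi t t0 Ht Ht0), <- (Cpsi t t0 Ht Ht0).
  split; assumption.
Qed.

Theorem theorem2 (I3 g a b lo hi : R)
  (hI3 : 0 < I3) (ha : 0 < a) (hb : b <> 0)
  (hJ : forall t, lo < t < hi -> 0 < a + b * t) :
  (* direct statement *)
  (forall phi th psi pphi pth ppsi : R -> R,
     hamilton_solution I3 g a b lo hi phi th psi pphi pth ppsi ->
     (forall t, lo < t < hi -> 0 < th t < PI) ->
     (forall t s, lo < t < hi -> lo < s < hi -> pphi t = pphi s) /\
     (forall t s, lo < t < hi -> lo < s < hi -> ppsi t = ppsi s) /\
     (forall t, lo < t < hi ->
        PV_deg_solution (kappainf_sq b (pphi t) (ppsi t))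
          (kappa0_sq b (pphi t) (ppsi t)) (gammaPV a b g) a b lo hi
          (fun tau => th (t_of a b tau)))) /\
  (* converse: the equation of motion of theta is equivalent to P_V *)
  (forall (cphi cpsi : R) (phi psi th : R -> R),
     (forall t, lo < t < hi -> 0 < th t < PI) ->
     ((exists pth : R -> R, theta_equation I3 g a b lo hi cphi cpsi phi psi th pth)
      <->
      PV_deg_solution (kappainf_sq b cphi cpsi) (kappa0_sq b cphi cpsi)
        (gammaPV a b g) a b lo hi (fun tau => th (t_of a b tau)))).
Proof.
  split.
  - intros phi th psi pphi pth ppsi Hham Hth.
    destruct (hamilton_conserved_momenta I3 g a b lo hi _ _ _ _ _ _ Hham)
      as [Cphi Cpsi].
    split; [exact Cphi | split; [exact Cpsi |]].
    intros t0 Ht0.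
    apply (PV_of_theta_equation I3 g a b lo hi _ _ phi psi th hI3 ha hb hJ Hth pth).
    exact (hamilton_theta_equation I3 g a b lo hi t0 _ _ _ _ _ _ Hham Ht0).
  - intros cphi cpsi phi psi th Hth. split.
    + intros [pth Heq].
      exact (PV_of_theta_equation I3 g a b lo hi _ _ phi psi th hI3 ha hb hJ Hth pth Heq).
    + intros HPV. eexists.
      exact (theta_equation_of_PV I3 g a b lo hi _ _ phi psi th hI3 ha hb hJ Hth HPV).
Qed.
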